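(* A nondecreasing sequence of positive integers is the detour sequence of a tree if and only if it is the sequence $1$, or the sequence $2,2$, or it has the form \[(a)_k,\ (a+1)_{k_1},\ (a+2)_{k_2},\ \ldots,\ (m)_{k_l}\] where $m \ge 3$ is an integer, $a=\left\lceil \frac{m+1}{2}\right\rceil$, $l=m-a$, $k_j \ge 2$ for $1\le j\le l$, and $k=1$ if $m$ is odd and $k=2$ if $m$ is even.
   Context: All graphs are finite and simple. The order of a path is its number of vertices. For a vertex $v$ of $G$, $\tau(v)$ is the order of a longest path in $G$ having $v$ as an endvertex. The detour sequence of $G$ is the nondecreasing sequence of the values $\tau(v)$, $v\in V(G)$ (one term per vertex). The notation $(n)_k$ denotes the integer $n$ repeated $k$ times consecutively. *)

From mathcomp Require Import all_boot.
Set Implicit Arguments. Unset Strict Implicit. Unset Printing Implicit Defensive.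

Definition simple_graph (T : finType) (e : rel T) : Prop :=
  symmetric e /\ irreflexive e.

(* A path (as a sequence of vertices): nonempty, consecutive vertices adjacent,
   all vertices distinct.  Its order is its size (number of vertices). *)
Definition is_gpath (T : finType) (e : rel T) (p : seq T) : bool :=
  match p with
  | [::] => false
  | x :: q => path e x q && uniq p
  end.

Definition is_gcycle (T : finType) (e : rel T) (p : seq T) : bool :=
  match p with
  | [::] => false
  | x :: q => (2 <= size q) && path e x q && e (last x q) x && uniq p
  end.

Definition is_tree (T : finType) (e : rel T) : Prop :=
  simple_graph e /\ 0 < #|T| /\
  (forall x y : T, connect e x y) /\
  (forall p : seq T, ~~ is_gcycle e p).

(* tau v: the order of a longest path having v as an endvertex.
   (Every path has order <= #|T|, so ranging over n <= #|T| suffices.) *)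
Definition tau (T : finType) (e : rel T) (v : T) : nat :=
  \max_(n < #|T|.+1 | [exists p : n.-tuple T,
        is_gpath e p && ((head v p == v) || (last v p == v))]) n.

Definition detour_seq (T : finType) (e : rel T) : seq nat :=
  sort leq [seq tau e v | v <- enum T].

(* The sequence (a)_k, (a+1)_{k_1}, ..., (m)_{k_l} with l = m - a = size ks. *)
Definition detour_form (a k : nat) (ks : seq nat) : seq nat :=
  nseq k a ++ flatten [seq nseq (nth 0 ks j) (a + j.+1) | j <- iota 0 (size ks)].

(* Paths in a tree are unique.  Let P be a longest path, of order m, and write
   a = ceil((m+1)/2).  If y is the i-th vertex of P and Q is a path from y,
   consider the last vertex z of Q on P.  The part of Q up to z runs along P,
   so prefixing Q with the side of P opposite to z gives a path; since P is
   longest, Q is no longer than the side of P containing z, and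
   tau(y) = max(i+1, m-i).  A vertex v off P reaches P at some y and may then
   follow either side of P, so a < tau(v) <= m.  Hence the detour multiset of a
   tree is that of a path of order m (where a occurs once or twice according
   to the parity of m and each value of (a, m] twice) plus extra values in
   (a, m], which is the stated form.  Conversely, attaching a new leaf to a
   vertex u with tau(u) = t - 1 and two distinct neighbours creates one vertex
   of detour t and changes no other detour: a path ending at the new leaf can
   be redirected to a neighbour of u that it avoids.  Starting from the path
   of order m, every vertex of detour in [a, m) has two neighbours, so every
   multiset of that form is realized. *)

From mathcomp Require Import all_boot zify.
Set Implicit Arguments. Unset Strict Implicit. Unset Printing Implicit Defensive.

Lemma head_rev (T : Type) (d : T) (p : seq T) : head d (rev p) = last d p.
Proof. by case: p => [//|x q]; rewrite lastI rev_rcons /= last_rcons. Qed.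

Lemma rev_cat_cons (T : Type) (L : seq T) y R :
  rev (L ++ y :: R) = rev R ++ y :: rev L.
Proof. by rewrite rev_cat rev_cons cat_rcons. Qed.

Lemma head_rcons_cat (T : Type) (d z : T) A B :
  head d (rcons A z) = head d (A ++ z :: B).
Proof. by case: A. Qed.

Lemma split_first (T : Type) (a : pred T) s : has a s ->
  exists A y B, [/\ s = A ++ y :: B, a y & ~~ has a A].
Proof. by case/split_find => y A B ay hA; exists A, y, B; rewrite cat_rcons. Qed.

Lemma split_last (T : Type) (a : pred T) s : has a s ->
  exists A y B, [/\ s = A ++ y :: B, a y & ~~ has a B].
Proof.
rewrite -has_rev => /split_first [A [y [B [E ay hA]]]].
exists (rev B), y, (rev A); split => //; last by rewrite has_rev.
by rewrite -[s]revK E rev_cat_cons.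
Qed.

Lemma mem_split (T : eqType) (x : T) (s : seq T) : x \in s ->
  exists A B, s = A ++ x :: B.
Proof. by case/splitPr => A B; exists A, B. Qed.

Lemma cat_uniq_disjoint (T : eqType) (s1 s2 : seq T) : uniq s1 -> uniq s2 ->
  {in s1, forall z, z \notin s2} -> uniq (s1 ++ s2).
Proof.
move=> u1 u2 H; rewrite cat_uniq u1 u2 andbT.
by apply/hasPn => z z2; apply: contraL z2 => /H.
Qed.

Lemma uniq_cat_cons (T : eqType) (s1 s2 : seq T) x : uniq (s1 ++ x :: s2) ->
  [/\ uniq s1, x \notin s1, uniq (x :: s2) & {in s1, forall z, z \notin x :: s2}].
Proof.
rewrite cat_uniq => /and3P[u1 h u2]; split => //.
  by apply: contraNN h => xs1; apply/hasP; exists x; rewrite ?mem_head.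
by move=> z zs1; apply: contraNN h => zs2; apply/hasP; exists z.
Qed.

Lemma gpath_cons (T : finType) (e : rel T) x q :
  is_gpath e (x :: q) = path e x q && uniq (x :: q).
Proof. by []. Qed.

Lemma gcycle_cons (T : finType) (e : rel T) x q : is_gcycle e (x :: q) =
  [&& 2 <= size q, path e x q, e (last x q) x & uniq (x :: q)].
Proof. by rewrite /is_gcycle !andbA. Qed.

(** * Paths and detours *)

Section GraphPaths.
Variables (T : finType) (e : rel T).
Hypothesis sym_e : symmetric e.

Lemma gpath_uniq p : is_gpath e p -> uniq p.
Proof. by case: p => //= x q /andP[]. Qed.

Lemma gpath_rev p : is_gpath e (rev p) = is_gpath e p.
Proof.
case: p => [//|x q].
have E : rev (x :: q) = last x q :: rev (belast x q) by rewrite lastI rev_rcons.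
rewrite /is_gpath E -E rev_uniq rev_path.
by congr (_ && _); apply: eq_path => a b; exact: sym_e.
Qed.

Lemma gpath_catl A B : A != [::] -> is_gpath e (A ++ B) -> is_gpath e A.
Proof.
case: A => [//|a A] _; rewrite cat_cons !gpath_cons cat_path -cat_cons cat_uniq.
by case/andP => /andP[-> _] /and3P[-> _ _].
Qed.

Lemma gpath_catr A B : B != [::] -> is_gpath e (A ++ B) -> is_gpath e B.
Proof.
move=> nB; rewrite -gpath_rev rev_cat => /gpath_catl.
by rewrite gpath_rev; apply; rewrite -size_eq0 size_rev size_eq0.
Qed.

Lemma gpath_suffix A y B : is_gpath e (A ++ y :: B) -> is_gpath e (y :: B).
Proof. exact: gpath_catr. Qed.

Lemma gpath_prefix A y B : is_gpath e (A ++ y :: B) -> is_gpath e (rcons A y).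
Proof. by rewrite -cat_rcons; apply: gpath_catl; case: A. Qed.

Lemma gpath_cat A y B : is_gpath e (rcons A y) -> is_gpath e (y :: B) ->
  ~~ has (mem (y :: B)) A -> is_gpath e (A ++ y :: B).
Proof.
case: A => [//|a A]; rewrite rcons_cons cat_cons !gpath_cons rcons_path.
move=> /andP[/andP[pA eA] uA] /andP[pB uB] hA.
rewrite -cat_cons cat_uniq uB has_sym hA andbT cat_path pA /= eA pB /=.
by move: uA; rewrite -rcons_cons rcons_uniq => /andP[_]; rewrite ?andbT.
Qed.

Lemma size_gpath p : is_gpath e p -> size p <= #|T|.
Proof. by move/gpath_uniq/card_uniqP <-; exact: max_card. Qed.

Lemma tau_ge v p : is_gpath e p -> head v p = v -> size p <= tau e v.
Proof.
move=> gp hv; have Hs : size p < #|T|.+1 by rewrite ltnS size_gpath.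
apply: (@leq_bigmax_cond _ _ _ (Ordinal Hs)).
by apply/existsP; exists (in_tuple p); rewrite /= gp hv eqxx.
Qed.

Lemma tau_le v N : (forall p, is_gpath e p -> head v p = v -> size p <= N) ->
  tau e v <= N.
Proof.
move=> H; apply/bigmax_leqP => n /existsP[t /andP[gp /orP[/eqP h|/eqP h]]].
  by rewrite -(size_tuple t); apply: H.
rewrite -(size_tuple t) -size_rev; apply: H; first by rewrite gpath_rev.
by rewrite head_rev.
Qed.

Lemma tau_gt0 v : 0 < tau e v.
Proof. exact: (@tau_ge v [:: v]). Qed.

Lemma gpath_first_hit v x (P : seq T) : connect e v x -> x \in P -> v \notin P ->
  exists A y, [/\ is_gpath e (v :: rcons A y), y \in P & ~~ has (mem P) (v :: A)].
Proof.
case/connectP => p0 /shortenP[p pth un _] -> xP vP.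
have gp : is_gpath e (v :: p) by rewrite gpath_cons pth.
have [|A' [y [B [pE yP hA]]]] := split_first (a := mem P) (s := v :: p).
  by apply/hasP; exists (last v p); rewrite ?mem_last.
case: A' pE hA => [[vy]|a A [av pE]] hA; first by case/negP: vP; rewrite vy.
subst a; exists A, y; split=> //.
by move: gp; rewrite pE -cat_cons; apply: gpath_prefix.
Qed.

Lemma gcycle_neighbours c x : is_gcycle e c -> x \in c ->
  exists y z, [/\ y != z, y \in c, z \in c, e x y & e x z].
Proof.
case: c => [//|x0 q]; rewrite gcycle_cons => /and4P[sz pq lq un] xin.
have cyc : cycle e (x0 :: q) by rewrite /= rcons_path pq lq.
case: (rot_to xin) => i s' rE.
have := rot_cycle i e (x0 :: q); rewrite rE cyc => cyc'.
have := rot_uniq i (x0 :: q); rewrite rE un => un'.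
have := size_rot i (x0 :: q); rewrite rE /= => -[szE].
have memE z : (z \in x0 :: q) = (z \in x :: s') by rewrite -rE mem_rot.
case: s' rE szE cyc' un' memE => [|y [|z s]] rE szE cyc' un' memE; rewrite -szE // in sz.
exists y, (last z s).
move: cyc'; rewrite /= rcons_path => /and3P[exy _ /andP[_ elx]].
split; rewrite ?memE //; last by rewrite sym_e.
- by apply: contraTneq un' => ->; rewrite /= mem_last andbF.
- by rewrite !inE eqxx orbT.
- by rewrite 2!in_cons mem_last !orbT.
Qed.

End GraphPaths.

(** * Longest paths in trees *)

Section Acyclic.
Variables (T : finType) (e : rel T).
Hypothesis sym_e : symmetric e.
Hypothesis acyc : forall p, ~~ is_gcycle e p.

Lemma gpath_adjacent_ends y B u : is_gpath e (y :: B) -> last y B = u ->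
  y != u -> e y u -> B = [:: u].
Proof.
case: B => [|b [|c B]] g lB nyu eyu; first by rewrite -lB eqxx in nyu.
  by rewrite -lB.
case/andP: g => pth un; move: (acyc (y :: b :: c :: B)).
by rewrite gcycle_cons pth un lB sym_e eyu.
Qed.

Lemma gpath_no_fork x a p b q : is_gpath e (x :: a :: p) ->
  is_gpath e (x :: b :: q) -> last a p = last b q -> a = b.
Proof.
move=> gp gq lE; apply/eqP/negPn/negP => nab.
(* With c the first vertex of a :: p on b :: q, the walk x, P1, c, rev Q1 is a cycle. *)
have hQ : has (mem (b :: q)) (a :: p).
  by apply/hasP; exists (last a p); [exact: mem_last | rewrite inE lE mem_last].
case: (split_first hQ) => P1 [c [P2 [PE cQ hP1]]].
case: (mem_split cQ) => Q1 [Q2 QE].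
rewrite PE in gp; rewrite QE in gq hP1.
have sz : 2 <= size (P1 ++ c :: rev Q1).
  case: P1 PE {gp hP1} => [|a1 P1] PE; last by rewrite /= size_cat /= addnS.
  case: Q1 QE {gq} => [|b1 Q1] QE; last by rewrite size_cat /= size_rev.
  by move: PE QE nab => /= [-> _] [-> _]; rewrite eqxx.
move: (gpath_uniq gp); rewrite cons_uniq => /andP[xP /uniq_cat_cons[uP1 cP1 _ _]].
move: (gpath_uniq gq); rewrite cons_uniq => /andP[xQ /uniq_cat_cons[uQ1 cQ1 _ _]].
have gq' : is_gpath e (c :: rcons (rev Q1) x).
  by rewrite -rev_cons -rev_rcons gpath_rev //; apply: (@gpath_prefix _ _ (x :: Q1) c Q2).
move: gq'; rewrite gpath_cons rcons_path => /andP[/andP[pQ lQ] _].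
move: gp; rewrite gpath_cons cat_path => /andP[/andP[pP1 /= /andP[lP1 _]] _].
apply: (negP (acyc (x :: P1 ++ c :: rev Q1))).
rewrite gcycle_cons sz cat_path pP1 /= lP1 pQ last_cat /= lQ.
rewrite !mem_cat !inE mem_rev negb_or.
move: xP xQ; rewrite !mem_cat !inE !negb_or => /andP[-> /andP[-> _]] /andP[-> _] /=.
apply: cat_uniq_disjoint => //; first by rewrite cons_uniq mem_rev rev_uniq cQ1.
move=> z zP1; rewrite inE mem_rev negb_or; apply/andP; split.
  by apply: contraNneq cP1 => <-.
by move: (hasPn hP1 z zP1); apply: contraNN => zQ1; rewrite inE mem_cat zQ1.
Qed.

Lemma gpath_unique x p q : is_gpath e (x :: p) -> is_gpath e (x :: q) ->
  last x p = last x q -> p = q.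
Proof.
elim: p x q => [|a p IH] x [|b q] // gp gq /= lE.
- move: (gpath_uniq gq); rewrite cons_uniq => /andP[/negP[]].
  by rewrite lE mem_last.
- move: (gpath_uniq gp); rewrite cons_uniq => /andP[/negP[]].
  by rewrite -lE mem_last.
have ab := gpath_no_fork gp gq lE; subst b; congr (_ :: _).
by apply: (IH a) lE; apply: (@gpath_suffix _ _ sym_e [:: x]).
Qed.

Lemma gpath_unique_rcons d A B z : is_gpath e (rcons A z) ->
  is_gpath e (rcons B z) -> head d (rcons A z) = head d (rcons B z) -> A = B.
Proof.
have zz C : ~~ is_gpath e (z :: rcons C z).
  by rewrite gpath_cons cons_uniq mem_rcons mem_head andbF.
case: A => [|x A]; case: B => [|y B] // gA gB /=.
- by move=> zy; case/negP: (zz B); rewrite {1}zy.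
- by move=> xz; case/negP: (zz A); rewrite -{1}xz.
move=> xy; subst y.
by have := gpath_unique gA gB; rewrite !last_rcons => /(_ erefl) /rcons_inj[->].
Qed.

End Acyclic.

Definition longest_gpath (T : finType) (e : rel T) (P : seq T) : Prop :=
  is_gpath e P /\ forall p, is_gpath e p -> size p <= size P.

Lemma longest_gpath_exists (T : finType) (e : rel T) : 0 < #|T| ->
  exists P, longest_gpath e P.
Proof.
case/card_gt0P => x _.
pose has_gpath n := [exists t : n.-tuple T, is_gpath e t].
have ex1 : exists n, has_gpath n by exists 1; apply/existsP; exists [tuple x].
have ub n : has_gpath n -> n <= #|T|.
  by case/existsP => t /size_gpath; rewrite size_tuple.
case: (ex_maxnP ex1 ub) => n /existsP[t gt] mx.
exists t; split => // p gp; rewrite size_tuple; apply: mx.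
by apply/existsP; exists (in_tuple p).
Qed.

Definition path_tau (m i : nat) : nat := maxn i.+1 (m - i).

Definition path_taus (m : nat) : seq nat := map (path_tau m) (iota 0 m).

(* [O] collects the detours of the vertices off a longest path of order [m]. *)
Definition detour_multiset (m : nat) (X : seq nat) : Prop :=
  exists2 O, all (fun t => (m.+2)./2 < t <= m) O & perm_eq X (path_taus m ++ O).

Section LongestPath.
Variables (T : finType) (e : rel T).
Hypothesis sym_e : symmetric e.

Lemma longest_gpath_rev P : longest_gpath e P -> longest_gpath e (rev P).
Proof. by case=> gP lP; split=> [|p /lP]; rewrite ?gpath_rev ?size_rev. Qed.

Lemma tau_le_longest P v : longest_gpath e P -> tau e v <= size P.
Proof. by case=> _ lP; apply: (tau_le sym_e) => p /lP. Qed.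

Hypothesis conn : forall x y, connect e x y.

Lemma tau_off_longest P v : longest_gpath e P -> v \notin P ->
  (size P).+2./2 < tau e v.
Proof.
case: P => [[]//|x P'] [gP lP] vP.
have [A [y [gA yP hA]]] := gpath_first_hit (conn v x) (mem_head x P') vP.
case: (mem_split yP) => L [R PE]; rewrite PE in gP.
have off_P (S : seq T) : {subset S <= L ++ y :: R} -> ~~ has (mem (y :: S)) (v :: A).
  move=> sub; apply: contra hA; apply: sub_has => w /=.
  by rewrite PE inE => /orP[/eqP->|/sub]; rewrite ?mem_cat ?mem_head ?orbT.
have gR : is_gpath e ((v :: A) ++ y :: R).
  apply: (@gpath_cat _ _ (v :: A) y R gA (gpath_suffix sym_e gP)).
  by apply: off_P => w wR; rewrite mem_cat inE wR !orbT.
have gL : is_gpath e ((v :: A) ++ y :: rev L).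
  have gP' : is_gpath e (rev R ++ y :: rev L) by rewrite -rev_cat_cons gpath_rev.
  apply: (@gpath_cat _ _ (v :: A) y (rev L) gA (gpath_suffix sym_e gP')).
  by apply: off_P => w; rewrite mem_rev mem_cat => ->.
have := tau_ge gR erefl; have := tau_ge gL erefl.
by rewrite PE /= !size_cat /= size_rev; lia.
Qed.

Hypothesis acyc : forall p, ~~ is_gcycle e p.

Lemma longest_gpath_exit L y R Q1 z Q2 : longest_gpath e (L ++ y :: R) ->
  is_gpath e (Q1 ++ z :: Q2) -> head y (Q1 ++ z :: Q2) = y -> z \in y :: R ->
  {in Q2, forall w, w \notin L ++ y :: R} -> size (Q1 ++ z :: Q2) <= (size R).+1.
Proof.
move=> [gP lP] gQ hQ zR hQ2.
(* Q runs along P up to z, so L ++ Q is a path, no longer than P. *)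
case: (mem_split zR) => S1 [S2 SE].
have Q1E : Q1 = S1.
  apply: (@gpath_unique_rcons _ _ sym_e acyc y); [exact: gpath_prefix gQ | |].
    by apply: (@gpath_prefix _ _ S1 z S2); rewrite -SE; apply: gpath_suffix gP.
  by rewrite (head_rcons_cat _ _ _ Q2) (head_rcons_cat _ _ _ S2) -SE hQ.
subst S1.
have PE : L ++ y :: R = (L ++ Q1) ++ z :: S2 by rewrite SE catA.
have gLQ : is_gpath e ((L ++ Q1) ++ z :: Q2).
  apply: gpath_cat; first by apply: (@gpath_prefix _ _ _ z S2); rewrite -PE.
    exact: gpath_suffix gQ.
  apply/hasPn => w wLQ; rewrite inE negb_or; apply/andP; split.
    move: (gpath_uniq gP); rewrite PE => /uniq_cat_cons[_ zn _ _].
    by apply: contraNneq zn => <-.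
  by apply: contraTN wLQ => /hQ2; rewrite PE mem_cat => /norP[].
have := lP _ gLQ; have := congr1 size SE; rewrite PE !size_cat /=; lia.
Qed.

Lemma tau_longest L y R : longest_gpath e (L ++ y :: R) ->
  tau e y = maxn (size L).+1 (size R).+1.
Proof.
move=> lP; have lP' := longest_gpath_rev lP; rewrite rev_cat_cons in lP'.
apply/eqP; rewrite eqn_leq; apply/andP; split; last first.
  rewrite geq_max -(size_rev L).
  by rewrite !(tau_ge (gpath_suffix sym_e lP.1)) ?(tau_ge (gpath_suffix sym_e lP'.1)).
apply: (tau_le sym_e) => Q gQ hQ.
have hasQ : has (mem (L ++ y :: R)) Q.
  apply/hasP; exists y; last by rewrite inE mem_cat mem_head orbT.
  by case: Q gQ hQ => [//|q Q] _ /= ->; rewrite mem_head.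
case: (split_last hasQ) => Q1 [z [Q2 [QE zP hQ2]]]; subst Q.
have {}hQ2 : {in Q2, forall w, w \notin L ++ y :: R} by move=> w; apply: (hasPn hQ2).
move: zP; rewrite inE mem_cat => /orP[zL|zR]; last first.
  by apply: leq_trans (longest_gpath_exit lP gQ hQ zR hQ2) (leq_maxr _ _).
apply: leq_trans (leq_maxl _ _); rewrite -(size_rev L).
apply: (longest_gpath_exit lP' gQ hQ); first by rewrite inE mem_rev zL orbT.
by move=> w /hQ2; rewrite -rev_cat_cons mem_rev.
Qed.

Lemma tau_longest_nth P x0 i : longest_gpath e P -> i < size P ->
  tau e (nth x0 P i) = path_tau (size P) i.
Proof.
move=> lP iP; have PE : P = take i P ++ nth x0 P i :: drop i.+1 P.
  by rewrite -drop_nth // cat_take_drop.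
rewrite PE in lP; rewrite (tau_longest lP) size_takel ?size_drop 1?ltnW //.
by rewrite /path_tau; congr maxn; lia.
Qed.

Lemma map_tau_longest P : longest_gpath e P -> map (tau e) P = path_taus (size P).
Proof.
case: P => [//|x0 P'] lP; apply: (@eq_from_nth _ 0).
  by rewrite !size_map size_iota.
move=> i; rewrite size_map => iP.
by rewrite (nth_map x0) // (nth_map 0) ?size_iota // nth_iota // add0n tau_longest_nth.
Qed.

End LongestPath.

Lemma tree_detour_multiset (T : finType) (e : rel T) : is_tree e ->
  exists2 m, 0 < m & detour_multiset m (map (tau e) (enum T)).
Proof.
case=> [[sym_e _] [cT [conn acyc]]].
have [P lP] := longest_gpath_exists e cT.
have m0 : 0 < size P.
  by case/card_gt0P: cT => x _; apply: leq_trans (lP.2 [:: x] isT).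
exists (size P) => //; exists (map (tau e) [seq v <- enum T | v \notin P]).
  rewrite all_map; apply/allP => v; rewrite mem_filter => /andP[vP _] /=.
  by rewrite (tau_off_longest sym_e conn lP vP) (tau_le_longest sym_e v lP).
rewrite -(map_tau_longest sym_e acyc lP) -map_cat; apply: perm_map.
apply: uniq_perm; first exact: enum_uniq.
  apply: cat_uniq_disjoint; [exact: gpath_uniq lP.1 | by rewrite filter_uniq ?enum_uniq |].
  by move=> z zP; rewrite mem_filter zP.
by move=> z; rewrite mem_cat mem_filter mem_enum andbT; case: (z \in P).
Qed.

(** * Realizing detour multisets *)

Definition path_graph (m : nat) : rel 'I_m := fun i j => (i.+1 == j) || (j.+1 == i).
Arguments path_graph : clear implicits.

Section PathGraph.
Variable m : nat.

Lemma path_graph_sym : symmetric (path_graph m).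
Proof. by move=> i j; rewrite /path_graph orbC. Qed.

Lemma path_graph_irr : irreflexive (path_graph m).
Proof. by move=> i; rewrite /path_graph; apply/norP; split; apply/eqP; lia. Qed.

Lemma path_graph_connect (i j : 'I_m) : connect (path_graph m) i j.
Proof.
wlog le_ij : i j / i <= j.
  move=> H; case: (leqP i j) => [/H//|/ltnW/H].
  by rewrite (sym_connect_sym path_graph_sym).
have [d jE] : exists d, (j : nat) = i + d by exists (j - i); lia.
elim: d j jE {le_ij} => [|d IH] j jE; first by rewrite (val_inj (etrans jE (addn0 i))).
have lt : i + d < m by have := ltn_ord j; lia.
apply: connect_trans (IH (Ordinal lt) erefl) (connect1 _).
by rewrite /path_graph /= jE addnS eqxx.
Qed.

Lemma path_graph_acyclic p : ~~ is_gcycle (path_graph m) p.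
Proof.
apply/negP; case: p => [//|x0 q] cp.
have [M MP Mmax] :=
  @arg_maxnP _ x0 (mem (x0 :: q)) (fun i : 'I_m => i : nat) (mem_head _ _).
have [y [z [yz yP zP eMy eMz]]] := gcycle_neighbours path_graph_sym cp MP.
move: (Mmax y yP) (Mmax z zP) => /= My Mz.
case/eqP: yz; apply: ord_inj; rewrite /path_graph in eMy eMz.
by case/orP: eMy => /eqP eMy; case/orP: eMz => /eqP eMz; lia.
Qed.

Lemma path_graph_tree : 0 < m -> is_tree (path_graph m).
Proof.
move=> m0; split; first by split; [exact: path_graph_sym | exact: path_graph_irr].
rewrite card_ord; split=> //.
by split; [exact: path_graph_connect | exact: path_graph_acyclic].
Qed.

Lemma longest_gpath_path_graph : 0 < m -> longest_gpath (path_graph m) (enum 'I_m).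
Proof.
case: m => [//|n] _; split; last first.
  by move=> p /size_gpath; rewrite card_ord size_enum_ord.
have := val_enum_ord n.+1; case: (enum 'I_n.+1) (enum_uniq 'I_n.+1) => [//|x s] un [x0 sE].
rewrite gpath_cons un andbT.
have -> : path (path_graph n.+1) x s =
    path [rel i j | (i.+1 == j) || (j.+1 == i)] x (map val s) by rewrite path_map.
rewrite x0 sE; elim: {x s x0 sE un} n 0 => //= n IH k.
by rewrite eqxx IH.
Qed.

Lemma tau_path_graph (i : 'I_m) : tau (path_graph m) i = path_tau m i.
Proof.
have m0 : 0 < m by case: i => /= i; lia.
have lP := longest_gpath_path_graph m0.
have := @tau_longest_nth _ _ path_graph_sym path_graph_acyclic _ i i lP.
by rewrite nth_ord_enum size_enum_ord; apply.
Qed.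

Lemma taus_path_graph : map (tau (path_graph m)) (enum 'I_m) = path_taus m.
Proof.
case: (posnP m) => [->|m0]; first by rewrite enum_ord0.
have := map_tau_longest path_graph_sym path_graph_acyclic (longest_gpath_path_graph m0).
by rewrite size_enum_ord.
Qed.

End PathGraph.

Lemma map_Some_pmap (T : eqType) (p : seq (option T)) :
  None \notin p -> p = map Some (pmap id p).
Proof.
elim: p => [//|[a|] p IH]; rewrite in_cons //= => Np.
by rewrite -IH.
Qed.

Definition add_leaf (T : finType) (e : rel T) (u : T) : rel (option T) :=
  fun x y => match x, y with
  | Some a, Some b => e a b
  | None, Some b => b == u
  | Some a, None => a == u
  | None, None => false
  end.

Section AddLeaf.
Variables (T : finType) (e : rel T) (u : T).
Local Notation e' := (add_leaf e u).

Lemma gpath_map_Some p : is_gpath e' (map Some p) = is_gpath e p.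
Proof.
case: p => [//|x q]; rewrite map_cons !gpath_cons -map_cons (map_inj_uniq Some_inj).
by rewrite path_map.
Qed.

Lemma gpath_add_leaf_None v p : is_gpath e' (Some v :: p) -> None \in p ->
  exists2 q, p = rcons (map Some q) None & last v q = u.
Proof.
move=> gp /mem_split[A [B pE]]; subst p.
have [_ NA _ disj] :=
  uniq_cat_cons (gpath_uniq (gp : is_gpath e' ((Some v :: A) ++ None :: B))).
move: gp; rewrite gpath_cons cat_path => /andP[/and3P[_ lA pB] _].
have [w lAw wu] : exists2 w, last (Some v) A = Some w & w == u.
  by case: (last (Some v) A) lA => [w|//] wu; exists w.
case: B pB disj => [_|[b|//] B /andP[/eqP bu _]] disj; last first.
  by have := disj _ (mem_last (Some v) A); rewrite lAw (eqP wu) -bu !inE eqxx orbT.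
have NA' : None \notin A by apply: contra NA => NA; rewrite inE NA orbT.
rewrite (map_Some_pmap NA') in lAw *.
by exists (pmap id A); rewrite ?cats1 //; move: lAw wu; rewrite last_map => -[->] /eqP.
Qed.

Hypothesis sym_e : symmetric e.

Lemma add_leaf_sym : symmetric e'.
Proof. by case=> [a|] [b|] //=; rewrite sym_e. Qed.

Hypothesis irr_e : irreflexive e.
Hypothesis acyc : forall p, ~~ is_gcycle e p.
Hypothesis conn : forall x y, connect e x y.

Lemma add_leaf_acyclic p : ~~ is_gcycle e' p.
Proof.
apply/negP => cp; case: (boolP (None \in p)) => Np.
  have [[b|] [[c|] [bc _ _]]] // := gcycle_neighbours add_leaf_sym cp Np.
  by move=> /eqP bu /eqP cu; rewrite bu cu eqxx in bc.
move: cp; rewrite (map_Some_pmap Np); case: (pmap id p) => [//|x q].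
rewrite map_cons gcycle_cons size_map path_map last_map -map_cons.
by rewrite (map_inj_uniq Some_inj) -gcycle_cons (negbTE (acyc _)).
Qed.

Lemma connect_map_Some a b : connect e a b -> connect e' (Some a) (Some b).
Proof.
case/connectP => p pth ->; apply/connectP; exists (map Some p).
  by rewrite path_map.
by rewrite last_map.
Qed.

Lemma add_leaf_tree : is_tree e'.
Proof.
split; first by split; [exact: add_leaf_sym | case=> //=].
rewrite card_option; split=> //; split; last exact: add_leaf_acyclic.
case=> [a|] [b|]; rewrite ?connect0 ?connect_map_Some //.
  by apply: connect_trans (connect_map_Some (conn a u)) (connect1 _); rewrite /= eqxx.
by apply: connect_trans (connect1 _) (connect_map_Some (conn u b)); rewrite /= eqxx.
Qed.

Lemma gpath_neighbour_penultimate A y : is_gpath e A -> last u A = u ->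
  y \in A -> e u y -> exists S, A = S ++ [:: y; u].
Proof.
move=> gA lA /mem_split[S [B AE]] ey; exists S; rewrite AE.
have yu : y != u by apply: contraTneq ey => ->; rewrite irr_e.
rewrite (@gpath_adjacent_ends _ _ sym_e acyc y B u) //.
- by apply: (@gpath_suffix _ _ sym_e S); rewrite -AE.
- by rewrite -lA AE last_cat.
- by rewrite sym_e.
Qed.

Variables y1 y2 : T.
Hypotheses (y12 : y1 != y2) (ey1 : e u y1) (ey2 : e u y2).

Lemma gpath_avoids_neighbour A : is_gpath e A -> last u A = u ->
  exists2 z, e u z & z \notin A.
Proof.
move=> gA lA; case: (boolP (y1 \in A)) => h1; last by exists y1.
case: (boolP (y2 \in A)) => h2; last by exists y2.
have [S1 E1] := gpath_neighbour_penultimate gA lA h1 ey1.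
have [S2 E2] := gpath_neighbour_penultimate gA lA h2 ey2.
have := congr1 rev (etrans (esym E1) E2).
by rewrite !rev_cat => -[y12E]; move: y12; rewrite y12E eqxx.
Qed.

Lemma tau_add_leaf_Some v : tau e' (Some v) = tau e v.
Proof.
apply/eqP; rewrite eqn_leq; apply/andP; split; last first.
  apply: (tau_le sym_e) => p gp hp; rewrite -(size_map Some).
  by apply: tau_ge; rewrite ?gpath_map_Some //; case: p hp {gp} => //= x q ->.
apply: (tau_le add_leaf_sym) => -[//|x p] gp /= xv; subst x.
case: (boolP (None \in p)) => Np; last first.
  move: gp; rewrite (map_Some_pmap Np) -map_cons gpath_map_Some size_map => gp.
  exact: tau_ge gp erefl.
(* A path through the new leaf ends there; reroute its last step away from it. *)
have [q pE lq] := gpath_add_leaf_None gp Np.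
have gq : is_gpath e (v :: q).
  by rewrite -gpath_map_Some; apply: (@gpath_catl _ _ _ [:: None]); rewrite //= cats1 -pE.
have [z ez zq] := gpath_avoids_neighbour gq lq.
have gz : is_gpath e (rcons (v :: q) z).
  move: gq; rewrite rcons_cons !gpath_cons rcons_path -rcons_cons rcons_uniq zq lq ez.
  by case/andP => -> ->.
by have := tau_ge gz erefl; rewrite pE /= !size_rcons size_map.
Qed.

Lemma tau_add_leaf_None : tau e' None = (tau e u).+1.
Proof.
apply/eqP; rewrite eqn_leq; apply/andP; split.
  apply: (tau_le add_leaf_sym) => -[//|x [//|b q]] gp /= xN; subst x.
  have [w bw wu] : exists2 w, b = Some w & w == u.
    by case: b gp => [w|] /andP[/andP[]] //; exists w.
  have Nq : None \notin b :: q by case/andP: gp => _ /andP[].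
  have gq : is_gpath e' (b :: q) by apply: (@gpath_suffix _ _ add_leaf_sym [:: None]).
  rewrite (map_Some_pmap Nq) gpath_map_Some in gq.
  rewrite ltnS -[(size q).+1]/(size (b :: q)) (map_Some_pmap Nq) size_map.
  by apply: tau_ge gq _; rewrite bw /= (eqP wu).
have t0 := tau_gt0 e' None.
rewrite -(prednK t0) ltnS; apply: (tau_le sym_e) => -[//|x q] gq /= xu; subst x.
rewrite -ltnS (prednK t0) -(size_map Some).
apply: (@tau_ge _ e' None (None :: map Some (u :: q))) => //.
move: gq; rewrite -gpath_map_Some !gpath_cons /= eqxx => /andP[-> ->].
by rewrite in_cons /= andbT; apply/negP => /mapP[].
Qed.

Lemma taus_add_leaf : perm_eq (map (tau e') (enum {: option T}))
  ((tau e u).+1 :: map (tau e) (enum T)).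
Proof.
have pe : perm_eq (enum {: option T}) (None :: map Some (enum T)).
  apply: uniq_perm; first exact: enum_uniq.
    rewrite cons_uniq (map_inj_uniq Some_inj) enum_uniq andbT.
    by apply/mapP => -[].
  by case=> [a|]; rewrite mem_enum inE ?mem_head // in_cons (mem_map Some_inj) mem_enum.
have := perm_map (tau e') pe; rewrite /= tau_add_leaf_None -map_comp.
by rewrite (eq_map (g := tau e)) // => v /=; rewrite tau_add_leaf_Some.
Qed.

End AddLeaf.

Definition has_branch_at (T : finType) (e : rel T) (t : nat) : Prop :=
  exists u y1 y2, [/\ tau e u = t, y1 != y2, e u y1 & e u y2].

Lemma path_graph_branch m t : (m.+2)./2 <= t < m -> has_branch_at (path_graph m) t.
Proof.
move=> ht; have h1 : t.-1 < m by lia.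
have h2 : t.-2 < m by lia.
have h3 : t < m by lia.
exists (Ordinal h1), (Ordinal h2), (Ordinal h3); split.
- by rewrite tau_path_graph /path_tau /=; lia.
- by apply/eqP => -[]; lia.
- by rewrite /path_graph /=; apply/orP; right; apply/eqP; lia.
- by rewrite /path_graph /=; apply/orP; left; apply/eqP; lia.
Qed.

Lemma tree_with_taus m O : 0 < m -> all (fun t => (m.+2)./2 < t <= m) O ->
  exists (T : finType) (e : rel T), [/\ is_tree e,
    perm_eq (map (tau e) (enum T)) (path_taus m ++ O) &
    forall t, (m.+2)./2 <= t < m -> has_branch_at e t].
Proof.
move=> m0; elim: O => [_|t O IH] /=.
  exists 'I_m, (path_graph m); split; first exact: path_graph_tree.
    by rewrite cats0 taus_path_graph.
  exact: path_graph_branch.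
case/andP=> /andP[ht1 ht2] /IH[T [e [tr pe br]]].
have [u [y1 [y2 [tu y12 ey1 ey2]]]] : has_branch_at e t.-1 by apply: br; lia.
case: (tr) => [[sym_e irr_e] [_ [conn acyc]]].
exists (option T), (add_leaf e u); split.
- exact: add_leaf_tree.
- apply: perm_trans (taus_add_leaf sym_e irr_e acyc y12 ey1 ey2) _.
  rewrite tu prednK; last lia.
  apply: perm_trans (_ : perm_eq _ (t :: (path_taus m ++ O))) _; first by rewrite perm_cons.
  by rewrite perm_sym perm_catC /= perm_cons perm_catC.
- move=> t' /br[u' [z1 [z2 [tu' z12 ez1 ez2]]]].
  exists (Some u'), (Some z1), (Some z2); split => //.
  by rewrite (tau_add_leaf_Some sym_e irr_e acyc y12 ey1 ey2).
Qed.

(** * Counting *)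

Lemma perm_count_mem (s1 s2 : seq nat) :
  (forall x : nat, count_mem x s1 = count_mem x s2) -> perm_eq s1 s2.
Proof. by move=> H; apply/allP => x _ /=; rewrite H. Qed.

Lemma path_tau_eq m i t : i < m ->
  (path_tau m i == t) = ((i == t.-1) || (i == m - t)) && ((m.+2)./2 <= t <= m).
Proof.
rewrite /path_tau => im; case: eqVneq => H; apply/esym.
  apply/andP; split; last by apply/andP; split; lia.
  by case: (leqP (m - i) i.+1) => h; apply/orP; [left|right]; apply/eqP; lia.
by apply/negbTE/negP => /andP[/orP[/eqP E|/eqP E] /andP[h1 h2]]; lia.
Qed.

Lemma count_iota_pair m u w : u < m -> w < m ->
  count (fun i => (i == u) || (i == w)) (iota 0 m) = if u == w then 1 else 2.
Proof.
have count1 x : x < m -> count_mem x (iota 0 m) = 1.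
  by move=> xm; rewrite count_uniq_mem ?iota_uniq // mem_iota xm.
move=> um wm; case: eqVneq => [<-|uw].
  by rewrite (eq_count (a2 := pred1 u)) ?count1 // => i; rewrite orbb.
have := count_predUI (pred1 u) (pred1 w) (iota 0 m).
rewrite (eq_count (a1 := predI _ _) (a2 := pred0)) ?count_pred0 ?count1 ?addn0 // => i /=.
by apply/negbTE/negP => /andP[/eqP -> /eqP E]; rewrite E eqxx in uw.
Qed.

Lemma count_path_taus m t : count_mem t (path_taus m) =
  if (m.+2)./2 <= t <= m then (if (t == (m.+2)./2) && odd m then 1 else 2) else 0.
Proof.
rewrite count_map (eq_in_count (a2 := fun i => ((i == t.-1) || (i == m - t)) &&
  ((m.+2)./2 <= t <= m))); last by move=> i; rewrite mem_iota => /= im; rewrite -path_tau_eq.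
case: ifP => ht; last by rewrite (eq_count (a2 := pred0)) ?count_pred0 // => i; rewrite andbF.
rewrite (eq_count (a2 := fun i => (i == t.-1) || (i == m - t))); last by move=> i; rewrite andbT.
rewrite count_iota_pair; [|lia|lia].
move: (odd_double_half m); rewrite -addnn.
by case: (odd m) => /= Hm; case: eqVneq => E; case: eqVneq => E2 //=; lia.
Qed.

Lemma count_flatten_nseq a g t l :
  count_mem t (flatten [seq nseq (g j) (a + j.+1) | j <- iota 0 l]) =
  if a < t <= a + l then g (t - a.+1) else 0.
Proof.
elim: l => [|l IH]; first by case: ifP => //; lia.
rewrite -addn1 iotaD map_cat flatten_cat count_cat IH /= cats0 count_nseq /=.
case: (ltngtP t (a + l.+1)) => h; rewrite ?mul0n ?addn0 ?mul1n.
- by case: ifP; case: ifP => //; lia.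
- by case: ifP; case: ifP => //; lia.
- case: ifP => [|_]; first lia.
  by case: ifP => [_|]; [congr g; lia | lia].
Qed.

Lemma count_detour_form a k ks t : count_mem t (detour_form a k ks) =
  (a == t) * k + (if a < t <= a + size ks then nth 0 ks (t - a.+1) else 0).
Proof. by rewrite count_cat count_nseq count_flatten_nseq. Qed.

Lemma sorted_cat_nseq s n x : sorted leq s -> all (leq^~ x) s ->
  sorted leq (s ++ nseq n x).
Proof.
rewrite !(sorted_pairwise leq_trans) pairwise_cat => -> sx /=.
apply/andP; split; first by apply/allrelP => y z ys /nseqP[-> _]; apply: (allP sx).
by elim: n => //= n ->; rewrite all_nseq leqnn orbT.
Qed.

Lemma sorted_detour_form a k ks : sorted leq (detour_form a k ks).
Proof.
suff /andP[] : sorted leq (detour_form a k ks) &&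
  all (leq^~ (a + size ks)) (detour_form a k ks) by [].
rewrite /detour_form; elim: (size ks) => [|l /andP[IH1 IH2]].
  by rewrite /= cats0 addn0 all_nseq leqnn orbT andbT (@sorted_cat_nseq [::] k a).
have {}IH2 : all (leq^~ (a + l.+1)) (nseq k a ++
    flatten [seq nseq (nth 0 ks j) (a + j.+1) | j <- iota 0 l]).
  by apply: sub_all IH2 => y /=; lia.
rewrite -addn1 iotaD map_cat flatten_cat /= cats0 catA all_cat all_nseq addn1.
by rewrite sorted_cat_nseq // IH2 add0n leqnn orbT.
Qed.

Lemma count_detour_form_path_taus m ks (t : nat) : 0 < m -> size ks = m - (m.+2)./2 ->
  all (fun kj => 2 <= kj) ks ->
  count_mem t (detour_form (m.+2)./2 (if odd m then 1 else 2) ks) =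
  count_mem t (path_taus m) +
  (if (m.+2)./2 < t <= m then nth 0 ks (t - ((m.+2)./2).+1) - 2 else 0).
Proof.
move=> m0 sk ak; have am : (m.+2)./2 <= m by lia.
rewrite count_detour_form count_path_taus sk subnKC //.
case: (ltngtP t (m.+2)./2) => [//|lt_at|->] /=; last by rewrite am mul1n.
case: (leqP t m) => // tm.
have : 2 <= nth 0 ks (t - (m./2).+2) by apply: (allP ak); apply: mem_nth; rewrite sk; lia.
lia.
Qed.

Lemma detour_multiset_form m X : 0 < m ->
  detour_multiset m X <->
  exists ks, [/\ size ks = m - (m.+2)./2, all (fun kj => 2 <= kj) ks &
    perm_eq X (detour_form (m.+2)./2 (if odd m then 1 else 2) ks)].
Proof.
move=> m0; split.
- case=> O aO pX.
  pose ks := [seq (count_mem ((m.+2)./2 + j.+1) O).+2 | j <- iota 0 (m - (m.+2)./2)].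
  have sk : size ks = m - (m.+2)./2 by rewrite size_map size_iota.
  have ak : all (fun kj => 2 <= kj) ks by rewrite all_map; apply/allP.
  exists ks; split=> //; apply: perm_trans pX _; apply: perm_count_mem => t.
  rewrite count_detour_form_path_taus // count_cat; congr (_ + _); case: ifP => ht.
    rewrite (nth_map 0) ?nth_iota -?sk ?size_map ?size_iota; try lia.
    by rewrite subn2 add0n (_ : _ + _ = t) //; lia.
  by apply/count_memPn; apply: contraFN ht; apply: (allP aO).
- case=> ks [sk ak pX].
  exists (flatten [seq nseq (nth 0 ks j - 2) ((m.+2)./2 + j.+1)
                  | j <- iota 0 (m - (m.+2)./2)]).
    apply/allP => t; rewrite -has_pred1 has_count count_flatten_nseq.
    by case: ifP => //; lia.
  apply: perm_trans pX _; apply: perm_count_mem => t.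
  rewrite count_detour_form_path_taus // count_cat count_flatten_nseq subnKC //.
  lia.
Qed.

Lemma detour_seq_perm (T : finType) (e : rel T) (s : seq nat) : sorted leq s ->
  perm_eq (map (tau e) (enum T)) s -> detour_seq e = s.
Proof.
move=> ss pe; apply: (sorted_eq leq_trans anti_leq) => //.
  exact: (sort_sorted leq_total).
by rewrite perm_sort.
Qed.

Lemma tree_detour_seq (s : seq nat) : sorted leq s ->
  (exists (T : finType) (e : rel T), is_tree e /\ detour_seq e = s) <->
  (exists2 m, 0 < m & detour_multiset m s).
Proof.
move=> ss; split.
  case=> T [e [tr <-]]; have [m m0 [O aO pe]] := tree_detour_multiset tr.
  by exists m => //; exists O; rewrite // /detour_seq perm_sort.
case=> m m0 [O aO ps]; have [T [e [tr pe _]]] := tree_with_taus m0 aO.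
exists T, e; split=> //.
by apply: detour_seq_perm ss _; rewrite (perm_trans pe) // perm_sym.
Qed.

Unset Implicit Arguments.

Theorem theorem1p11 (s : seq nat) :
  sorted leq s -> all (fun x => 0 < x) s ->
  ((exists (T : finType) (e : rel T), is_tree e /\ detour_seq e = s) <->
   (s = [:: 1] \/ s = [:: 2; 2] \/
    exists (m : nat) (ks : seq nat),
      let a := (m.+2)./2 in
      [/\ 3 <= m, size ks = m - a, all (fun kj => 2 <= kj) ks &
          s = detour_form a (if odd m then 1 else 2) ks])).
Proof.
move=> ss _; rewrite tree_detour_seq //.
have formE m ks : perm_eq s (detour_form (m.+2)./2 (if odd m then 1 else 2) ks) ->
    s = detour_form (m.+2)./2 (if odd m then 1 else 2) ks.
  by apply: (sorted_eq leq_trans anti_leq) => //; apply: sorted_detour_form.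
split.
- case=> m m0 /(detour_multiset_form s m0)[ks [sk ak /formE ->]].
  have [m1|[m2|m3]] : m = 1 \/ m = 2 \/ 3 <= m by lia.
  + by left; move: sk; rewrite m1 => /size0nil ->.
  + by right; left; move: sk; rewrite m2 => /size0nil ->.
  + by right; right; exists m, ks.
- case=> [->|[->|[m [ks [m3 sk ak ->]]]]].
  + by exists 1 => //; apply/(@detour_multiset_form 1 _ isT); exists [::].
  + by exists 2 => //; apply/(@detour_multiset_form 2 _ isT); exists [::].
  + exists m; first lia.
    by apply/(@detour_multiset_form _ _ (ltnW (ltnW m3))); exists ks.
Qed.
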